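(* Let $P\subset\mathbb{R}^{n+1}$ be an $n$-dimensional lattice polytope contained in the affine hyperplane $\{x_{n+1}=1\}$, of degree $d$, let $x$ be a lattice point in the relative interior of $(n-d+1)P$, and let $S\subset P$ be an $n$-dimensional lattice simplex with vertices $v_0,\dots,v_n$ such that $x$ lies in the cone spanned by $S$. If $y$ is a point in the cone spanned by $k$ vertices of $P$, then $|V^+(y)|\le|Z^-(y)|+k$.
   Context: Lattice points are points of $\mathbb{Z}^{n+1}$. The degree $d$ of $P$ is the degree of the $h^*$-polynomial $h^*_P(t)$ defined by $\sum_{m\ge0}|mP\cap\mathbb{Z}^{n+1}|t^m=h^*_P(t)/(1-t)^{n+1}$; equivalently, $d$ is the largest nonnegative integer such that $(n-d)P$ has no lattice points in its relative interior. Every $y\in\mathbb{R}^{n+1}$ is written uniquely as $y=b_0(y)v_0+\dots+b_n(y)v_n$. $Z$ is the set of vertices $v_i$ of $S$ with $b_i(x)=0$; $V$ is the set of vertices $v_j$ of $S$ with $b_j(x)$ a positive integer. For $y\in\mathbb{R}^{n+1}$: $Z^+(y)$ (resp. $Z^-(y)$) is the set of $v_i\in Z$ with $b_i(y)>0$ (resp. $<0$), and $V^+(y)$ (resp. $V^-(y)$) is the set of $v_j\in V$ with $b_j(y)>0$ (resp. $<0$). *)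

From HB Require Import structures.
From mathcomp Require Import all_boot all_order all_algebra.
From mathcomp Require Import reals.
Set Implicit Arguments. Unset Strict Implicit. Unset Printing Implicit Defensive.
Import Order.TTheory GRing.Theory Num.Theory.
Local Open Scope ring_scope.

Section Defs.
Variable R : realType.

Definition is_lattice (m : nat) (z : 'rV[R]_m) : Prop :=
  forall i, z 0 i \is a Num.int.

Definition in_conv (m : nat) (s : seq 'rV[R]_m) (z : 'rV[R]_m) : Prop :=
  exists l : 'I_(size s) -> R,
    (forall i, 0 <= l i) /\ \sum_i l i = 1 /\ z = \sum_i l i *: s`_i.

Definition in_cone (m : nat) (s : seq 'rV[R]_m) (z : 'rV[R]_m) : Prop :=
  exists l : 'I_(size s) -> R,
    (forall i, 0 <= l i) /\ z = \sum_i l i *: s`_i.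

Definition in_aff (m : nat) (s : seq 'rV[R]_m) (z : 'rV[R]_m) : Prop :=
  exists l : 'I_(size s) -> R,
    \sum_i l i = 1 /\ z = \sum_i l i *: s`_i.

Definition in_relint (m : nat) (s : seq 'rV[R]_m) (z : 'rV[R]_m) : Prop :=
  in_conv s z /\
  exists e : R, 0 < e /\
    forall w, in_aff s w -> (forall i, `|w 0 i - z 0 i| < e) -> in_conv s w.

(* the dilation k * conv s = conv (k * s) *)
Definition dilate (m : nat) (k : nat) (s : seq 'rV[R]_m) : seq 'rV[R]_m :=
  map (fun p => k%:R *: p) s.

Definition is_vertex (m : nat) (s : seq 'rV[R]_m) (v : 'rV[R]_m) : Prop :=
  in_conv s v /\
  forall a b (t : R), in_conv s a -> in_conv s b -> 0 < t < 1 ->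
    v = t *: a + (1 - t) *: b -> a = b.

(* P = conv vs is an n-dimensional lattice polytope in {x_{n+1} = 1}:
   generators are lattice points with last coordinate 1, and their affine
   hull is n-dimensional (equivalently, their linear span is R^{n+1}). *)
Definition lattice_polytope_hyp (n : nat) (vs : seq 'rV[R]_n.+1) : Prop :=
  (forall p, p \in vs -> is_lattice p /\ p 0 ord_max = 1) /\
  \rank (\matrix_(i < size vs) vs`_i) = n.+1.

(* degree d of P (= n+1 - codegree): kP has no relative-interior lattice
   point for 1 <= k <= n-d, while (n-d+1)P has one. *)
Definition has_degree (n : nat) (vs : seq 'rV[R]_n.+1) (d : nat) : Prop :=
  (d <= n)%N /\
  (forall k : nat, (0 < k <= n - d)%N ->
     ~ (exists z, is_lattice z /\ in_relint (dilate k vs) z)) /\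
  (exists z, is_lattice z /\ in_relint (dilate (n - d + 1) vs) z).

Definition vmx (n : nat) (v : 'I_n.+1 -> 'rV[R]_n.+1) : 'M[R]_n.+1 :=
  \matrix_(i < n.+1) v i.

Definition lattice_simplex_in (n : nat) (vs : seq 'rV[R]_n.+1)
  (v : 'I_n.+1 -> 'rV[R]_n.+1) : Prop :=
  (forall i, is_lattice (v i)) /\ (forall i, in_conv vs (v i)) /\
  vmx v \in unitmx.

(* barycentric coordinates: y = \sum_i b_i(y) v_i *)
Definition bary (n : nat) (v : 'I_n.+1 -> 'rV[R]_n.+1) (y : 'rV[R]_n.+1)
  (i : 'I_n.+1) : R := (y *m invmx (vmx v)) 0 i.

Definition Zset (n : nat) (v : 'I_n.+1 -> 'rV[R]_n.+1) (x : 'rV[R]_n.+1)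
  : {set 'I_n.+1} := [set i | bary v x i == 0].

Definition Vset (n : nat) (v : 'I_n.+1 -> 'rV[R]_n.+1) (x : 'rV[R]_n.+1)
  : {set 'I_n.+1} := [set j | (bary v x j \is a Num.nat) && (0 < bary v x j)].

Definition Zminus (n : nat) (v : 'I_n.+1 -> 'rV[R]_n.+1) (x y : 'rV[R]_n.+1)
  : {set 'I_n.+1} := [set i in Zset v x | bary v y i < 0].

Definition Vplus (n : nat) (v : 'I_n.+1 -> 'rV[R]_n.+1) (x y : 'rV[R]_n.+1)
  : {set 'I_n.+1} := [set j in Vset v x | 0 < bary v y j].

End Defs.

(* Argue by contradiction: if |V^+(y)| > |Z^-(y)| + k, the lattice point
     z = x + sum_{Z^-} v_i - sum_{V^+} v_j + sum_l w_l,
   where y = sum_l mu_l w_l, has height h = (n-d+1) + |Z^-| + k - |V^+| with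
   1 <= h <= n - d.  Writing
     z = lam x + sum_i ((1 - lam) b_i(x) + [i in Z^-] - [i in V^+] + eps b_i(y)) v_i
           + sum_l (1 - eps mu_l) w_l,
   all coefficients are nonnegative for small eps and then small lam, because
   b_j(x) >= 1 where j is in V^+ (and there b_j(y) > 0), while b_i(y) >= 0 wherever
   b_i(x) = 0 and i is not in Z^-.  So z = lam x + q with q in the cone over P, and
   since x lies in the relative interior of (n-d+1)P, z lies in the relative
   interior of hP, contradicting the degree of P. *)

From mathcomp Require Import all_boot all_order all_algebra.
From mathcomp Require Import reals.
From mathcomp Require Import ring lra zify.
Import Order.TTheory GRing.Theory Num.Theory.
Local Open Scope ring_scope.
Set Implicit Arguments. Unset Strict Implicit. Unset Printing Implicit Defensive.

Lemma sum_cast_ord (V : nmodType) n1 n2 (e : n1 = n2) (F : 'I_n2 -> V) :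
  \sum_(i < n1) F (cast_ord e i) = \sum_(i < n2) F i.
Proof. by case: n2 / e in F *; apply: eq_bigr => i _; rewrite cast_ord_id. Qed.

Section Height.
Variables (R : realType) (m : nat).
Implicit Types (s : seq 'rV[R]_m.+1) (z : 'rV[R]_m.+1).

Definition ht z := z 0 ord_max.

Lemma htD z1 z2 : ht (z1 + z2) = ht z1 + ht z2.
Proof. by rewrite /ht mxE. Qed.

Lemma htB z1 z2 : ht (z1 - z2) = ht z1 - ht z2.
Proof. by rewrite /ht !mxE. Qed.

Lemma htZ c z : ht (c *: z) = c * ht z.
Proof. by rewrite /ht mxE. Qed.

Lemma ht_comb (I : finType) (P : pred I) (c : I -> R) (f : I -> 'rV[R]_m.+1) :
  (forall i, P i -> ht (f i) = 1) -> ht (\sum_(i | P i) c i *: f i) = \sum_(i | P i) c i.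
Proof.
move=> f1; rewrite /ht summxE; apply: eq_bigr => i Pi.
by rewrite mxE -/(ht (f i)) f1 ?mulr1.
Qed.

Lemma ht_sum (I : finType) (A : {pred I}) (f : I -> 'rV[R]_m.+1) :
  (forall i, i \in A -> ht (f i) = 1) -> ht (\sum_(i in A) f i) = #|A|%:R.
Proof. by move=> f1; rewrite -sumr_const /ht summxE; apply: eq_bigr => i /f1. Qed.

Lemma ht_seq_comb s (l : 'I_(size s) -> R) : (forall p, p \in s -> ht p = 1) ->
  ht (\sum_i l i *: s`_i) = \sum_i l i.
Proof. by move=> s1; apply: ht_comb => i _; apply/s1/mem_nth. Qed.

Lemma ht_conv s z : (forall p, p \in s -> ht p = 1) -> in_conv s z -> ht z = 1.
Proof. by move=> s1 [l [_ [l1 ->]]]; rewrite ht_seq_comb. Qed.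

End Height.

Section Cone.
Variables (R : realType) (m : nat).
Implicit Types (s : seq 'rV[R]_m.+1) (z : 'rV[R]_m.+1).

Lemma cone0 s : in_cone s 0.
Proof. by exists (fun _ => 0); split => //; rewrite big1 // => i _; rewrite scale0r. Qed.

Lemma coneD s z1 z2 : in_cone s z1 -> in_cone s z2 -> in_cone s (z1 + z2).
Proof.
case=> a [a0 ->] [b [b0 ->]]; exists (fun i => a i + b i); split.
  by move=> i; rewrite addr_ge0.
by rewrite -big_split; apply: eq_bigr => i _; rewrite scalerDl.
Qed.

Lemma coneZ s c z : 0 <= c -> in_cone s z -> in_cone s (c *: z).
Proof.
move=> c0 [a [a0 ->]]; exists (fun i => c * a i); split.
  by move=> i; rewrite mulr_ge0.
by rewrite scaler_sumr; apply: eq_bigr => i _; rewrite scalerA.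
Qed.

Lemma cone_comb s (I : finType) (P : pred I) (c : I -> R) (f : I -> 'rV[R]_m.+1) :
  (forall i, P i -> 0 <= c i) -> (forall i, P i -> in_cone s (f i)) ->
  in_cone s (\sum_(i | P i) c i *: f i).
Proof.
move=> c0 fs; apply: big_ind => //; [exact: cone0 | exact: coneD |].
by move=> i Pi; apply: coneZ; [apply: c0 | apply: fs].
Qed.

Lemma cone_nil z : in_cone [::] z -> z = 0.
Proof. by case=> l [_ ->]; rewrite big_ord0. Qed.

Lemma conv_cone s z : in_conv s z -> in_cone s z.
Proof. by case=> l [l0 [_ ->]]; exists l. Qed.

Lemma cone_span s z : in_cone s z -> z \in <<s>>%VS.
Proof.
by case=> l [_ ->]; apply: rpred_sum => i _; apply/rpredZ/memv_span/mem_nth.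
Qed.

End Cone.

Section Dilation.
Variables (R : realType) (m : nat) (s : seq 'rV[R]_m.+1).
Hypothesis s_ht : forall p, p \in s -> ht p = 1.
Implicit Types (z : 'rV[R]_m.+1).

Lemma dilate_nth h i : (dilate h s)`_i = h%:R *: s`_i.
Proof.
have [i_lt | i_ge] := ltnP i (size s); first by rewrite (nth_map 0).
by rewrite !nth_default ?scaler0 ?size_map.
Qed.

Let size_dilate h : size (dilate h s) = size s := size_map _ s.

Lemma comb_dilate h (l : 'I_(size (dilate h s)) -> R) :
  \sum_i l i *: (dilate h s)`_i
  = \sum_i (h%:R * l (cast_ord (esym (size_dilate h)) i)) *: s`_i.
Proof.
rewrite -(sum_cast_ord (esym (size_dilate h))); apply: eq_bigr => i _.
by rewrite dilate_nth scalerA mulrC.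
Qed.

Lemma conv_dilateP h z : (0 < h)%N ->
  in_conv (dilate h s) z <-> in_cone s z /\ ht z = h%:R.
Proof.
move=> h_gt0; have hR : h%:R != 0 :> R by rewrite pnatr_eq0 -lt0n.
split=> [[l [l0 [l1 ->]]] | [[a [a0 ->]] hta]].
  rewrite comb_dilate ht_seq_comb // -mulr_sumr sum_cast_ord l1 mulr1.
  split => //; exists (fun i => h%:R * l (cast_ord (esym (size_dilate h)) i)).
  by split => // i; rewrite mulr_ge0.
rewrite ht_seq_comb // in hta.
exists (fun j => a (cast_ord (size_dilate h) j) / h%:R); split; last split.
- by move=> j; rewrite divr_ge0.
- by rewrite -mulr_suml sum_cast_ord hta divff.
by rewrite comb_dilate; apply: eq_bigr => i _; rewrite cast_ordKV mulrC divfK.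
Qed.

Lemma aff_dilateP h z : (0 < h)%N ->
  in_aff (dilate h s) z <-> z \in <<s>>%VS /\ ht z = h%:R.
Proof.
move=> h_gt0; have hR : h%:R != 0 :> R by rewrite pnatr_eq0 -lt0n.
split=> [[l [l1 ->]] | [z_span htz]].
  rewrite comb_dilate ht_seq_comb // -mulr_sumr sum_cast_ord l1 mulr1.
  by split => //; apply: rpred_sum => i _; apply/rpredZ/memv_span/mem_nth.
have z_def := coord_span (X := in_tuple s) z_span.
rewrite z_def ht_seq_comb // in htz.
exists (fun j => coord (in_tuple s) (cast_ord (size_dilate h) j) z / h%:R); split.
  by rewrite -mulr_suml (sum_cast_ord _ (fun i => coord _ i z)) htz divff.
by rewrite comb_dilate {1}z_def; apply: eq_bigr => i _; rewrite cast_ordKV mulrC divfK.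
Qed.

Lemma relint_shift c h x q lam : (0 < c)%N -> (0 < h)%N -> 0 < lam ->
  in_relint (dilate c s) x -> in_cone s q -> ht (lam *: x + q) = h%:R ->
  in_relint (dilate h s) (lam *: x + q).
Proof.
move=> c_gt0 h_gt0 lam_gt0 [x_conv [e [e_gt0 x_ball]]] q_cone htz.
have [x_cone htx] := (conv_dilateP _ c_gt0).1 x_conv.
have shift_cone x' : in_cone s x' -> in_cone s (lam *: x' + q).
  by move=> x'_cone; apply/coneD/q_cone/coneZ/x'_cone/ltW.
split; first exact/conv_dilateP/(conj (shift_cone _ x_cone)).
exists (lam * e); split; first by rewrite mulr_gt0.
move=> u /(aff_dilateP _ h_gt0) [u_span htu] u_near.
set x' := x + lam^-1 *: (u - (lam *: x + q)).
have u_def : u = lam *: x' + q.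
  by apply/rowP => j; rewrite !mxE; field; rewrite gt_eqF.
have x'_conv : in_conv (dilate c s) x'.
  apply: x_ball.
    apply/aff_dilateP => //; split; last by rewrite htD htZ htB htz htu subrr mulr0 addr0.
    have x_span := cone_span x_cone.
    by rewrite rpredD // rpredZ // rpredB // rpredD ?rpredZ // cone_span.
  move=> i; have := u_near i; rewrite /x' !mxE addrAC subrr add0r normrM.
  by rewrite ger0_norm ?invr_ge0 ?ltW // mulrC ltr_pdivrMl.
rewrite u_def; apply/conv_dilateP => //; split; last by rewrite -u_def.
by apply/shift_cone; case/conv_dilateP: x'_conv.
Qed.

End Dilation.

Section Vertex.
Variables (R : realType) (m : nat) (s : seq 'rV[R]_m.+1).

Lemma conv_nth (i : 'I_(size s)) : in_conv s s`_i.
Proof.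
exists (fun j => (j == i)%:R); split; first by move=> j; rewrite ler0n.
split; first by rewrite (bigD1 i) //= eqxx big1 ?addr0 // => j /negPf ->.
by rewrite (bigD1 i) //= eqxx scale1r big1 ?addr0 // => j /negPf ->; rewrite scale0r.
Qed.

(* Splitting off half of the weight of a generator [s`_i] of positive weight writes [u] as a
   proper convex combination of [s`_i] and another point of [conv s]. *)
Lemma vertex_mem u : is_vertex s u -> u \in s.
Proof.
case=> [[l [l0 [l1 u_def]]] extreme].
have [i /andP[_ li_gt0]] : exists i, true && (0 < l i).
  by apply: psumr_neq0P => [i _|]; [exact: l0 | rewrite l1; apply/eqP/oner_neq0].
have li_le1 : l i <= 1 by rewrite -l1 (bigD1 i) //= lerDl sumr_ge0.
set t := l i / 2.
have t_gt0 : 0 < t by rewrite divr_gt0.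
have t_lt1 : t < 1 by rewrite /t ltr_pdivrMr // mul1r (le_lt_trans li_le1) // ltr1n.
have t_neq1 : 1 - t != 0 by rewrite subr_eq0 eq_sym lt_eqF.
set l' := fun j => (l j - (j == i)%:R * t) / (1 - t).
have b_conv : in_conv s (\sum_j l' j *: s`_j).
  exists l'; split; last split => //.
  - move=> j; rewrite /l' divr_ge0 ?subr_ge0 ?(ltW t_lt1) //.
    by case: eqP => [->|_]; rewrite ?mul0r // mul1r /t ler_pdivrMr // ler_peMr ?ler1n // ltW.
  rewrite /l' -mulr_suml sumrB l1 (bigD1 i) //= eqxx mul1r big1 ?addr0 ?divff //.
  by move=> j /negPf ->; rewrite mul0r.
have u_split : u = t *: s`_i + (1 - t) *: \sum_j l' j *: s`_j.
  rewrite scaler_sumr (eq_bigr (fun j => l j *: s`_j - ((j == i)%:R * t) *: s`_j)).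
    rewrite sumrB -u_def (bigD1 i) //= eqxx mul1r big1 => [|j /negPf ->]; last first.
      by rewrite mul0r scale0r.
    by rewrite addr0 addrC subrK.
  by move=> j _; rewrite scalerA mulrC -mulrA mulVf // mulr1 scalerBl.
have si_b := extreme _ _ t (conv_nth i) b_conv; rewrite t_gt0 t_lt1 in si_b.
by rewrite u_split -(si_b isT u_split) -scalerDl addrC subrK scale1r mem_nth.
Qed.

End Vertex.

Lemma small_mul_le (R : realFieldType) (I : finType) (c d : I -> R) :
  (forall i, 0 < d i) -> exists2 e, 0 < e & forall e' i, 0 <= e' <= e -> e' * `|c i| <= d i.
Proof.
move=> d_gt0; set S := \sum_i `|c i| / d i.
have S_ge0 : 0 <= S by apply: sumr_ge0 => i _; rewrite divr_ge0 // ltW.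
exists (1 + S)^-1 => [|e' i /andP[e'_ge0 e'_le]]; first by rewrite invr_gt0 ltr_wpDr.
apply: le_trans (ler_wpM2r (normr_ge0 _) e'_le) _.
have ci_le : `|c i| / d i <= 1 + S.
  rewrite (le_trans _ (ler_wpDl ler01 (lexx S))) // /S (bigD1 i) //= lerDl.
  by apply: sumr_ge0 => j _; rewrite divr_ge0 // ltW.
rewrite mulrC ler_pdivrMr ?ltr_wpDr //.
by move: ci_le; rewrite ler_pdivrMr // mulrC.
Qed.

Section Barycentric.
Variables (R : realType) (n : nat) (v : 'I_n.+1 -> 'rV[R]_n.+1).
Hypothesis v_unit : vmx v \in unitmx.

Lemma bary_sum p : p = \sum_i bary v p i *: v i.
Proof.
rewrite {1}(_ : p = (p *m invmx (vmx v)) *m vmx v); last by rewrite mulmxKV.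
by rewrite mulmx_sum_row; apply: eq_bigr => i _; rewrite /vmx rowK.
Qed.

Lemma bary_comb (l : 'I_n.+1 -> R) i : bary v (\sum_j l j *: v j) i = l i.
Proof.
have -> : \sum_j l j *: v j = (\row_j l j) *m vmx v.
  by rewrite mulmx_sum_row; apply: eq_bigr => j _; rewrite /vmx rowK mxE.
by rewrite /bary mulmxK // mxE.
Qed.

Lemma cone_bary_ge0 p i : in_cone [seq v j | j <- enum 'I_n.+1] p -> 0 <= bary v p i.
Proof.
have size_vs : size [seq v j | j <- enum 'I_n.+1] = n.+1 by rewrite size_map size_enum_ord.
case=> l [l_ge0 ->]; rewrite -(sum_cast_ord (esym size_vs)).
under eq_bigr => j _ do rewrite (nth_map ord0) /= ?size_enum_ord // nth_ord_enum.
by rewrite bary_comb.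
Qed.

Lemma card_Vset_le p : (forall i, 0 <= bary v p i) -> #|Vset v p|%:R <= \sum_i bary v p i.
Proof.
move=> b_ge0; rewrite [leRHS](bigID (mem (Vset v p))) /= -sumr_const.
rewrite -[leLHS]addr0; apply: lerD (sumr_ge0 _ _) => [|i _]; last exact: b_ge0.
apply: ler_sum => i; rewrite inE => /andP[/natrP[k ->]].
by rewrite ltr0n ler1n.
Qed.

Lemma card_Vplus_le x y : (forall i, ht (v i) = 1) -> (forall i, 0 <= bary v x i) ->
  #|Vplus v x y|%:R <= ht x.
Proof.
move=> v_ht bx_ge0; rewrite {2}(bary_sum x) ht_comb //.
apply: le_trans (card_Vset_le bx_ge0); rewrite ler_nat subset_leq_card //.
by apply/subsetP => i; rewrite inE => /andP[].
Qed.

Lemma Vplus0 x : Vplus v x 0 = set0.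
Proof.
apply/setP => i; rewrite !inE (_ : bary v 0 i = 0) ?ltxx ?andbF //.
by rewrite /bary mul0mx mxE.
Qed.

End Barycentric.

Section ShiftPoint.
Variables (R : realType) (n : nat) (v : 'I_n.+1 -> 'rV[R]_n.+1) (x : 'rV[R]_n.+1).
Variables (A B : {set 'I_n.+1}) (w : seq 'rV[R]_n.+1).

Definition shift_point :=
  x + \sum_(i in A) v i - \sum_(i in B) v i + \sum_(l < size w) w`_l.

Lemma ht_shift_point : (forall i, ht (v i) = 1) -> (forall u, u \in w -> ht u = 1) ->
  ht shift_point = ht x + #|A|%:R - #|B|%:R + (size w)%:R.
Proof.
move=> v_ht w_ht; rewrite /shift_point htD htB htD !ht_sum ?card_ord // => l _.
exact/w_ht/mem_nth.
Qed.

Lemma lattice_shift_point : is_lattice x -> (forall i, is_lattice (v i)) ->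
  (forall u, u \in w -> is_lattice u) -> is_lattice shift_point.
Proof.
move=> x_lat v_lat w_lat j; rewrite /shift_point !mxE !summxE.
rewrite rpredD ?rpredB ?rpredD ?rpred_sum // => i _; [exact: v_lat | exact: v_lat |].
exact/w_lat/mem_nth.
Qed.

Variables (vs : seq 'rV[R]_n.+1) (y : 'rV[R]_n.+1).
Hypothesis v_unit : vmx v \in unitmx.
Hypothesis v_cone : forall i, in_cone vs (v i).
Hypothesis w_cone : forall u, u \in w -> in_cone vs u.
Hypothesis bx_ge0 : forall i, 0 <= bary v x i.
Hypothesis A_bary : forall i, i \in A -> bary v x i = 0.
Hypothesis B_bary : forall i, i \in B -> 1 <= bary v x i /\ 0 < bary v y i.
Hypothesis notA_bary : forall i, i \notin A -> bary v x i = 0 -> 0 <= bary v y i.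

Section Weights.
Variables eps lam : R.
Hypothesis eps_gt0 : 0 < eps.
Hypothesis lam_le : lam <= 1 / 2.
Hypothesis eps_by :
  forall i, eps * `|bary v y i| <= if 0 < bary v x i then bary v x i / 2 else 1.
Hypothesis lam_bx : forall i, i \in B -> lam * bary v x i <= eps * bary v y i.

Definition shift_weight i :=
  (1 - lam) * bary v x i + (i \in A)%:R - (i \in B)%:R + eps * bary v y i.

Lemma shift_weight_ge0 i : 0 <= shift_weight i.
Proof.
rewrite /shift_weight; have := eps_by i.
have := ler_wpM2l (ltW eps_gt0) (ler_norm (- bary v y i)); rewrite normrN => eps_by_ge.
have [iA | iA] := boolP (i \in A).
  have iB : i \notin B by apply/negP => /B_bary[]; rewrite A_bary // ler10.
  by rewrite (negPf iB) A_bary //= ltxx mulr1n mulr0n; lra.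
have [iB | iB] := boolP (i \in B).
  by have [bx_ge1 _] := B_bary iB; have := lam_bx iB; rewrite /= mulr1n mulr0n; lra.
rewrite /= !mulr0n.
have := bx_ge0 i; rewrite le_eqVlt => /orP[/eqP bx0 | bx_gt0].
  by have := mulr_ge0 (ltW eps_gt0) (notA_bary iA (esym bx0)); rewrite -bx0; lra.
by rewrite bx_gt0; have := ler_wpM2r (ltW bx_gt0) lam_le; lra.
Qed.

Lemma shift_pointE (mu : 'I_(size w) -> R) : y = \sum_l mu l *: w`_l ->
  shift_point = lam *: x + (\sum_i shift_weight i *: v i + \sum_l (1 - eps * mu l) *: w`_l).
Proof.
move=> y_def.
have weights_v : \sum_i shift_weight i *: v i =
    (1 - lam) *: x + \sum_(i in A) v i - \sum_(i in B) v i + eps *: y.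
  rewrite {1}(bary_sum v_unit x) {1}(bary_sum v_unit y) !scaler_sumr.
  rewrite [\sum_(i in A) _]big_mkcond [\sum_(i in B) _]big_mkcond /=.
  rewrite -big_split -sumrB -big_split /=; apply: eq_bigr => i _.
  rewrite /shift_weight; case: (i \in A); case: (i \in B);
    by apply/rowP => j; rewrite !mxE /=; ring.
have weights_w : \sum_l (1 - eps * mu l) *: w`_l = \sum_(l < size w) w`_l - eps *: y.
  rewrite y_def scaler_sumr -sumrB; apply: eq_bigr => l _.
  by rewrite scalerBl scale1r scalerA.
by rewrite weights_v weights_w /shift_point; apply/rowP => j; rewrite !mxE; ring.
Qed.

End Weights.

Lemma shift_point_cone : in_cone w y ->
  exists2 lam, 0 < lam & exists2 q, in_cone vs q & shift_point = lam *: x + q.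
Proof.
case=> mu [mu_ge0 y_def].
pose dy i := if 0 < bary v x i then bary v x i / 2 else 1.
have [e1 e1_gt0 e1_by] :
    exists2 e, 0 < e & forall e' i, 0 <= e' <= e -> e' * `|bary v y i| <= dy i.
  by apply: small_mul_le => i; rewrite /dy; case: ifP => // bx_gt0; rewrite divr_gt0.
have [e2 e2_gt0 e2_mu] := small_mul_le mu (fun _ => ltr01).
set eps := Num.min e1 e2.
have eps_gt0 : 0 < eps by rewrite lt_min e1_gt0 e2_gt0.
pose dx i := if i \in B then eps * bary v y i else 1.
have [l1 l1_gt0 l1_bx] :
    exists2 e, 0 < e & forall e' i, 0 <= e' <= e -> e' * `|bary v x i| <= dx i.
  by apply: small_mul_le => i; rewrite /dx; case: ifP => // /B_bary[_ by_gt0]; rewrite mulr_gt0.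
set lam := Num.min l1 (1 / 2).
have lam_gt0 : 0 < lam by rewrite lt_min l1_gt0 divr_gt0.
have lam_le : lam <= 1 / 2 by rewrite ge_min lexx orbT.
have eps_by i : eps * `|bary v y i| <= dy i by apply: e1_by; rewrite ltW // ge_min lexx.
have eps_mu l : eps * mu l <= 1.
  by have := e2_mu eps l; rewrite ger0_norm // ltW //= ge_min lexx orbT; apply.
have lam_bx i : i \in B -> lam * bary v x i <= eps * bary v y i.
  move=> iB; have := l1_bx lam i.
  by rewrite ger0_norm // /dx iB ltW //= ge_min lexx; apply.
exists lam => //.
exists (\sum_i shift_weight eps lam i *: v i + \sum_l (1 - eps * mu l) *: w`_l).
  apply: coneD; apply: cone_comb => i _.
  - exact: shift_weight_ge0.
  - exact: v_cone.
  - by rewrite subr_ge0.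
  - exact/w_cone/mem_nth.
exact: shift_pointE.
Qed.

End ShiftPoint.

Lemma Zminus_Vplus_shift_cone (R : realType) (n : nat) (vs : seq 'rV[R]_n.+1)
    (v : 'I_n.+1 -> 'rV[R]_n.+1) (x y : 'rV[R]_n.+1) (w : seq 'rV[R]_n.+1) :
  vmx v \in unitmx -> (forall i, in_cone vs (v i)) -> (forall u, u \in w -> in_cone vs u) ->
  (forall i, 0 <= bary v x i) -> in_cone w y ->
  exists2 lam, 0 < lam & exists2 q, in_cone vs q &
    shift_point v x (Zminus v x y) (Vplus v x y) w = lam *: x + q.
Proof.
move=> v_unit v_cone w_cone bx_ge0; apply: shift_point_cone => // i.
- by rewrite !inE => /andP[/eqP].
- by rewrite !inE => /andP[/andP[/natrP[m ->]]]; rewrite ltr0n ler1n.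
- by rewrite !inE => + bx0; rewrite bx0 eqxx -leNgt.
Qed.

Theorem lemma2p5 (R : realType) (n d k : nat) (vs : seq 'rV[R]_n.+1)
  (x : 'rV[R]_n.+1) (v : 'I_n.+1 -> 'rV[R]_n.+1)
  (w : seq 'rV[R]_n.+1) (y : 'rV[R]_n.+1) :
  lattice_polytope_hyp vs ->
  has_degree vs d ->
  is_lattice x ->
  in_relint (dilate (n - d + 1) vs) x ->
  lattice_simplex_in vs v ->
  in_cone [seq v i | i <- enum 'I_n.+1] x ->
  size w = k -> uniq w -> (forall u, u \in w -> is_vertex vs u) ->
  in_cone w y ->
  (#|Vplus v x y| <= #|Zminus v x y| + k)%N.
Proof.
move=> [vs_lat _] [_ [no_relint _]] x_lat x_relint [v_lat [v_conv v_unit]] x_cone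
  size_w _ w_vert y_cone.
set A := Zminus v x y; set B := Vplus v x y.
rewrite leqNgt; apply/negP => B_big.
have vs_ht p : p \in vs -> ht p = 1 by case/vs_lat.
have v_ht i : ht (v i) = 1 := ht_conv vs_ht (v_conv i).
have w_vs u : u \in w -> u \in vs by move/w_vert/vertex_mem.
have bx_ge0 i := cone_bary_ge0 v_unit i x_cone.
have c_gt0 : (0 < n - d + 1)%N by rewrite addn1.
have [_ ht_x] := (conv_dilateP vs_ht x c_gt0).1 x_relint.1.
have B_le : (#|B| <= n - d + 1)%N by rewrite -(ler_nat R) -ht_x card_Vplus_le.
have k_gt0 : (0 < k)%N.
  rewrite lt0n -size_w size_eq0; apply: contraTN B_big => /eqP w0.
  by move: y_cone; rewrite w0 /B => /cone_nil ->; rewrite Vplus0 cards0.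
have w_cone u : u \in w -> in_cone vs u by case/w_vert => /conv_cone.
have [lam lam_gt0 [q q_cone z_def]] := Zminus_Vplus_shift_cone v_unit
  (fun i => conv_cone (v_conv i)) w_cone bx_ge0 y_cone.
set h := (n - d + 1 + #|A| + k - #|B|)%N.
have h_gt0 : (0 < h)%N by rewrite /h; lia.
have ht_z : ht (lam *: x + q) = h%:R.
  rewrite -z_def ht_shift_point // => [|u /w_vs/vs_ht //].
  by rewrite ht_x size_w /h natrB ?natrD; [ring | lia].
apply: (no_relint h); first by rewrite h_gt0 /h; lia.
exists (lam *: x + q); split.
  by rewrite -z_def; apply: lattice_shift_point => // u /w_vs/vs_lat[].
exact (relint_shift vs_ht c_gt0 h_gt0 lam_gt0 x_relint q_cone ht_z).
Qed.
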